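(* Let $c<d$ be real numbers and $\Lambda$ a closed interval of $\mathbb{R}$. Let $f\colon[c,d]\times\Lambda\to(0,\infty)$ be jointly continuous with $\partial f/\partial\lambda$ jointly continuous, and assume $\frac{\partial f}{\partial\lambda}(x,\lambda)=f(x,\lambda)g(x,\lambda)$ where, for each $\lambda\in\Lambda$, $g(\cdot,\lambda)$ is strictly increasing (respectively strictly decreasing) in $x$. Then $$h(x,\lambda)=\frac{\int_x^d f(y,\lambda)\,dy}{\int_c^x f(y,\lambda)\,dy}$$ is a strictly increasing (respectively strictly decreasing) function of $\lambda\in\Lambda$ for every $x\in(c,d)$. *)

From Stdlib Require Import Reals.
From Coquelicot Require Import Coquelicot.
Open Scope R_scope.

Definition closed_interval (L : R -> Prop) : Prop :=
  (forall a b e, L a -> L e -> a <= b <= e -> L b) /\ closed L.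

Definition continuous_on2 (S : R * R -> Prop) (F : R * R -> R) : Prop :=
  forall p, S p -> filterlim F (within S (locally p)) (locally (F p)).

(* phi has derivative d at l relative to the set D (one-sided at endpoints). *)
Definition is_derive_within (D : R -> Prop) (phi : R -> R) (l d : R) : Prop :=
  filterlim (fun mu => (phi mu - phi l) / (mu - l))
    (within (fun mu => D mu /\ mu <> l) (locally l)) (locally d).

Definition rect (c d : R) (L : R -> Prop) (p : R * R) : Prop :=
  c <= fst p <= d /\ L (snd p).

Definition hratio (f : R -> R -> R) (c d x lam : R) : R :=
  RInt (fun y => f y lam) x d / RInt (fun y => f y lam) c x.

(* For l1 < l2 and y < z, lam |-> f(z,lam) / f(y,lam) has logarithmic
   derivative g(z,lam) - g(y,lam) > 0, so s = f(.,l2) grows strictly faster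
   than p = f(.,l1): s(y) p(z) < s(z) p(y).  Hence p(x) s < s(x) p on [c,x)
   and p(x) s > s(x) p on (x,d], and integrating shows that, relative to its
   mass on [c,x], s puts more mass on [x,d] than p does.  The decreasing case
   is the same with l1 and l2 exchanged. *)

From Stdlib Require Import Reals Lra Psatz.
From Coquelicot Require Import Coquelicot.
Open Scope R_scope.

(* Coquelicot's integral and mean value results ask for continuity at every
   point; a function continuous on [a,b] is extended by composing with [clamp a b]. *)
Definition clamp (a b t : R) : R := Rmax a (Rmin b t).

Lemma clamp_in a b t : a <= b -> a <= clamp a b t <= b.
Proof. intros; unfold clamp, Rmax, Rmin; repeat destruct Rle_dec; lra. Qed.

Lemma clamp_id a b t : a <= t <= b -> clamp a b t = t.
Proof. intros; unfold clamp, Rmax, Rmin; repeat destruct Rle_dec; lra. Qed.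

Lemma Rabs_clamp_sub_le a b s t : Rabs (clamp a b s - clamp a b t) <= Rabs (s - t).
Proof. unfold clamp, Rmax, Rmin; repeat destruct Rle_dec; split_Rabs; lra. Qed.

Lemma filterlim_clamp a b t : a <= b ->
  filterlim (clamp a b) (locally t) (within (fun u => a <= u <= b) (locally (clamp a b t))).
Proof.
  intros Hab P [e He]. exists e. intros s Hs. apply He.
  - exact (Rle_lt_trans _ _ _ (Rabs_clamp_sub_le a b s t) Hs).
  - now apply clamp_in.
Qed.

Lemma continuous_clamp_comp a b (k : R -> R) : a <= b ->
  continuous_on (fun t => a <= t <= b) k ->
  forall t, continuous (fun s => k (clamp a b s)) t.
Proof.
  intros Hab Hk t. apply (filterlim_comp _ _ _ _ _ _ _ _ (filterlim_clamp a b t Hab)).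
  now apply Hk, clamp_in.
Qed.

Lemma continuous_on_div a b (u v : R -> R) : a <= b ->
  continuous_on (fun t => a <= t <= b) u -> continuous_on (fun t => a <= t <= b) v ->
  (forall t, a <= t <= b -> u t <> 0) ->
  continuous_on (fun t => a <= t <= b) (fun t => v t / u t).
Proof.
  intros Hab Hu Hv Hu0.
  apply (continuous_on_ext _ (fun t => v (clamp a b t) / u (clamp a b t))).
  { intros t Ht. now rewrite clamp_id. }
  apply continuous_on_forall. intros t _.
  apply (continuous_mult (fun s => v (clamp a b s)) (fun s => / u (clamp a b s))).
  - now apply continuous_clamp_comp.
  - apply continuous_Rinv_comp; [now apply continuous_clamp_comp |].
    now apply Hu0, clamp_in.
Qed.

Lemma continuous_on_scal_l (D : R -> Prop) (u : R -> R) r :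
  continuous_on D u -> continuous_on D (fun t => r * u t).
Proof.
  intros Hu t Ht. apply (filterlim_comp _ _ _ u (fun z => r * z) _ _ _ (Hu t Ht)).
  apply (continuous_mult (fun _ => r) (fun z => z)).
  - apply continuous_const.
  - apply continuous_id.
Qed.

Lemma continuous_on2_slice_fst (S : R * R -> Prop) (F : R * R -> R) y :
  continuous_on2 S F -> continuous_on (fun x => S (x, y)) (fun x => F (x, y)).
Proof.
  intros HF x Hx P HP. destruct (HF _ Hx P HP) as [e He].
  exists e. intros x' Hx' Sx'. apply He; [split; [exact Hx' | apply ball_center] | exact Sx'].
Qed.

Lemma continuous_on2_slice_snd (S : R * R -> Prop) (F : R * R -> R) x :
  continuous_on2 S F -> continuous_on (fun y => S (x, y)) (fun y => F (x, y)).
Proof.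
  intros HF y Hy P HP. destruct (HF _ Hy P HP) as [e He].
  exists e. intros y' Hy' Sy'. apply He; [split; [apply ball_center | exact Hy'] | exact Sy'].
Qed.

Lemma continuous_on_subinterval (u : R -> R) a b a' b' : a <= a' -> b' <= b ->
  continuous_on (fun y => a <= y <= b) u -> continuous_on (fun y => a' <= y <= b') u.
Proof.
  intros Ha Hb. apply continuous_on_subset. intros y Hy. lra.
Qed.

Lemma RInt_clamp a b (u : R -> R) : a <= b -> RInt (fun t => u (clamp a b t)) a b = RInt u a b.
Proof.
  intros Hab. apply RInt_ext. intros t Ht.
  rewrite Rmin_left, Rmax_right in Ht by lra. apply f_equal, clamp_id; lra.
Qed.

Lemma ex_RInt_continuous_on a b (u : R -> R) : a <= b ->
  continuous_on (fun t => a <= t <= b) u -> ex_RInt u a b.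
Proof.
  intros Hab Hu. apply (ex_RInt_ext (fun t => u (clamp a b t))).
  - intros t Ht. rewrite Rmin_left, Rmax_right in Ht by lra. apply f_equal, clamp_id; lra.
  - apply (ex_RInt_continuous (V := R_CompleteNormedModule)). intros t _.
    now apply continuous_clamp_comp.
Qed.

Lemma RInt_scal_l_continuous_on a b (u : R -> R) r : a <= b ->
  continuous_on (fun t => a <= t <= b) u -> RInt (fun t => r * u t) a b = r * RInt u a b.
Proof.
  intros Hab Hu. apply (RInt_scal (V := R_CompleteNormedModule)).
  now apply ex_RInt_continuous_on.
Qed.

Lemma RInt_lt_continuous_on a b (u v : R -> R) : a < b ->
  continuous_on (fun t => a <= t <= b) u -> continuous_on (fun t => a <= t <= b) v ->
  (forall t, a < t < b -> u t < v t) -> RInt u a b < RInt v a b.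
Proof.
  intros Hab Hu Hv Huv.
  rewrite <- (RInt_clamp a b u), <- (RInt_clamp a b v) by lra.
  apply RInt_lt; [exact Hab | intros t _; apply continuous_clamp_comp; auto; lra ..|].
  intros t Ht. rewrite !clamp_id by lra. now apply Huv.
Qed.

Lemma RInt_gt_0_continuous_on a b (u : R -> R) : a < b ->
  continuous_on (fun t => a <= t <= b) u -> (forall t, a < t < b -> 0 < u t) ->
  0 < RInt u a b.
Proof.
  intros Hab Hu Hpos. rewrite <- (RInt_clamp a b u) by lra.
  apply RInt_gt_0; [exact Hab | | intros t _; apply continuous_clamp_comp; auto; lra].
  intros t Ht. rewrite clamp_id by lra. now apply Hpos.
Qed.

Lemma continuous_on_derive_pos_lt (k k' : R -> R) a b : a < b ->
  continuous_on (fun t => a <= t <= b) k ->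
  (forall t, a < t < b -> is_derive k t (k' t)) -> (forall t, a < t < b -> 0 < k' t) ->
  k a < k b.
Proof.
  intros Hab Hk Hd Hpos.
  set (K := fun s => k (clamp a b s)).
  assert (HKd : forall t, a < t < b -> derivable_pt_lim K t (k' t)).
  { intros t Ht. apply is_derive_Reals, (is_derive_ext_loc k); [| now apply Hd].
    apply (filter_imp (fun s => a < s < b)).
    - intros s Hs. unfold K. rewrite clamp_id; lra.
    - now apply (open_and _ _ (open_gt a) (open_lt b)). }
  destruct (MVT K id a b (fun t Ht => exist _ (k' t) (HKd t Ht))
              (fun t _ => derivable_pt_id t) Hab) as [t [Ht E]].
  - intros t _. apply continuity_pt_filterlim, continuous_clamp_comp; auto; lra.
  - intros t _. apply derivable_continuous_pt, derivable_pt_id.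
  - rewrite derive_pt_id in E. simpl in E. unfold id, K in E.
    rewrite !clamp_id in E by lra. specialize (Hpos t Ht). nra.
Qed.

Lemma is_derive_of_within (D : R -> Prop) (phi : R -> R) t v :
  locally t D -> is_derive_within D phi t v -> is_derive phi t v.
Proof.
  intros HD Hw. apply is_derive_Reals. intros eps Heps.
  destruct (filter_and _ _ HD (proj1 (filterlim_locally _ _) Hw (mkposreal eps Heps)))
    as [del Hdel].
  exists del. intros h Hh0 Hh.
  assert (Hball : ball t del (t + h)).
  { change (Rabs (t + h - t) < del). now replace (t + h - t) with h by ring. }
  destruct (Hdel _ Hball) as [HDh Hq].
  assert (Hth : t + h <> t) by (intro E; apply Hh0; lra).
  specialize (Hq (conj HDh Hth)).
  change (Rabs ((phi (t + h) - phi t) / (t + h - t) - v) < eps) in Hq.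
  now replace (t + h - t) with h in Hq by ring.
Qed.

Lemma ratio_increasing_of_derive (u v u' v' : R -> R) a b : a < b ->
  (forall t, a <= t <= b -> 0 < u t) ->
  continuous_on (fun t => a <= t <= b) u -> continuous_on (fun t => a <= t <= b) v ->
  (forall t, a < t < b -> is_derive u t (u' t)) ->
  (forall t, a < t < b -> is_derive v t (v' t)) ->
  (forall t, a < t < b -> u' t * v t < v' t * u t) ->
  u b * v a < v b * u a.
Proof.
  intros Hab Hu Huc Hvc Hu' Hv' Hcross.
  assert (Hk : v a / u a < v b / u b).
  { apply (continuous_on_derive_pos_lt (fun t => v t / u t)
             (fun t => (v' t * u t - v t * u' t) / u t ^ 2) a b Hab).
    - apply continuous_on_div; auto; [lra |]. intros t Ht. specialize (Hu t Ht). lra.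
    - intros t Ht. apply is_derive_div; auto. specialize (Hu t ltac:(lra)). lra.
    - intros t Ht. specialize (Hu t ltac:(lra)). specialize (Hcross t Ht).
      apply Rdiv_lt_0_compat; [lra | now apply pow_lt]. }
  assert (Hua := Hu a ltac:(lra)). assert (Hub := Hu b ltac:(lra)).
  apply (Rmult_lt_compat_r (u a * u b)) in Hk; [| nra].
  replace (v a / u a * (u a * u b)) with (u b * v a) in Hk by (field; lra).
  replace (v b / u b * (u a * u b)) with (v b * u a) in Hk by (field; lra).
  exact Hk.
Qed.

Lemma RInt_tail_ratio_lt (p s : R -> R) a b x : a < x < b ->
  (forall y, a <= y <= b -> 0 < p y) -> (forall y, a <= y <= b -> 0 < s y) ->
  continuous_on (fun y => a <= y <= b) p -> continuous_on (fun y => a <= y <= b) s ->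
  (forall y z, a <= y -> y < z -> z <= b -> s y * p z < s z * p y) ->
  RInt p x b / RInt p a x < RInt s x b / RInt s a x.
Proof.
  intros Hx Hp Hs Hpc Hsc Hmono.
  assert (Hpx := Hp x ltac:(lra)). assert (Hsx := Hs x ltac:(lra)).
  assert (Hsplit : forall u : R -> R, continuous_on (fun y => a <= y <= b) u ->
            continuous_on (fun y => a <= y <= x) u /\ continuous_on (fun y => x <= y <= b) u)
    by (intros u Hu; split; apply (continuous_on_subinterval _ a b); auto; lra).
  destruct (Hsplit p Hpc) as [Hpl Hpr], (Hsplit s Hsc) as [Hsl Hsr].
  assert (Hleft : p x * RInt s a x < s x * RInt p a x).
  { rewrite <- !RInt_scal_l_continuous_on by (auto; lra).
    apply RInt_lt_continuous_on; [lra | now apply continuous_on_scal_l .. |].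
    intros y Hy. specialize (Hmono y x ltac:(lra) ltac:(lra) ltac:(lra)). lra. }
  assert (Hright : s x * RInt p x b < p x * RInt s x b).
  { rewrite <- !RInt_scal_l_continuous_on by (auto; lra).
    apply RInt_lt_continuous_on; [lra | now apply continuous_on_scal_l .. |].
    intros y Hy. specialize (Hmono x y ltac:(lra) ltac:(lra) ltac:(lra)). lra. }
  assert (HPl : 0 < RInt p a x)
    by (apply RInt_gt_0_continuous_on; [lra | auto | intros; apply Hp; lra]).
  assert (HPr : 0 < RInt p x b)
    by (apply RInt_gt_0_continuous_on; [lra | auto | intros; apply Hp; lra]).
  assert (HSl : 0 < RInt s a x)
    by (apply RInt_gt_0_continuous_on; [lra | auto | intros; apply Hs; lra]).
  apply (Rmult_lt_reg_r (RInt p a x * RInt s a x)); [nra |].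
  replace (RInt p x b / RInt p a x * (RInt p a x * RInt s a x))
    with (RInt p x b * RInt s a x) by (field; lra).
  replace (RInt s x b / RInt s a x * (RInt p a x * RInt s a x))
    with (RInt s x b * RInt p a x) by (field; lra).
  apply (Rmult_lt_reg_l (p x * s x)); [nra |].
  replace (p x * s x * (RInt p x b * RInt s a x))
    with ((p x * RInt s a x) * (s x * RInt p x b)) by ring.
  replace (p x * s x * (RInt s x b * RInt p a x))
    with ((s x * RInt p a x) * (p x * RInt s x b)) by ring.
  apply Rmult_le_0_lt_compat; auto; apply Rlt_le, Rmult_lt_0_compat; auto.
Qed.

Section LikelihoodRatio.

Variables (c d : R) (Lam : R -> Prop) (f df g : R -> R -> R).
Hypothesis HLam : closed_interval Lam.
Hypothesis Hpos : forall x lam, c <= x <= d -> Lam lam -> 0 < f x lam.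
Hypothesis Hfc : continuous_on2 (rect c d Lam) (fun p => f (fst p) (snd p)).
Hypothesis Hder : forall x lam, c <= x <= d -> Lam lam ->
  is_derive_within Lam (fun mu => f x mu) lam (df x lam).
Hypothesis Hfg : forall x lam, c <= x <= d -> Lam lam -> df x lam = f x lam * g x lam.

Lemma f_continuous_in_x lam : Lam lam ->
  continuous_on (fun y => c <= y <= d) (fun y => f y lam).
Proof.
  intros Hl. apply (continuous_on_subset (fun y => rect c d Lam (y, lam))).
  - intros y Hy. now split.
  - exact (continuous_on2_slice_fst _ _ lam Hfc).
Qed.

Lemma f_continuous_in_lam y l1 l2 : c <= y <= d -> Lam l1 -> Lam l2 ->
  continuous_on (fun t => l1 <= t <= l2) (fun t => f y t).
Proof.
  intros Hy L1 L2. apply (continuous_on_subset (fun t => rect c d Lam (y, t))).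
  - intros t Ht. split; [exact Hy | exact (proj1 HLam l1 t l2 L1 L2 Ht)].
  - exact (continuous_on2_slice_snd _ _ y Hfc).
Qed.

Lemma f_cross_lt y z l1 l2 : c <= y <= d -> c <= z <= d -> Lam l1 -> Lam l2 -> l1 < l2 ->
  (forall mu, l1 < mu < l2 -> g y mu < g z mu) ->
  f y l2 * f z l1 < f z l2 * f y l1.
Proof.
  intros Hy Hz L1 L2 Hl Hg.
  assert (HL : forall t, l1 <= t <= l2 -> Lam t)
    by (intros t; exact (proj1 HLam l1 t l2 L1 L2)).
  assert (Hloc : forall t, l1 < t < l2 -> locally t Lam).
  { intros t Ht. apply (filter_imp (fun s => l1 < s < l2)).
    - intros s Hs. apply HL; lra.
    - now apply (open_and _ _ (open_gt l1) (open_lt l2)). }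
  apply (ratio_increasing_of_derive (f y) (f z) (df y) (df z) l1 l2 Hl).
  - intros t Ht. now apply Hpos, HL.
  - now apply f_continuous_in_lam.
  - now apply f_continuous_in_lam.
  - intros t Ht. apply (is_derive_of_within Lam); [now apply Hloc | apply Hder, HL; auto; lra].
  - intros t Ht. apply (is_derive_of_within Lam); [now apply Hloc | apply Hder, HL; auto; lra].
  - intros t Ht. assert (Lt : Lam t) by (apply HL; lra).
    rewrite !Hfg by auto.
    assert (Hyz : 0 < f y t * f z t) by (apply Rmult_lt_0_compat; apply Hpos; auto).
    specialize (Hg t Ht). nra.
Qed.

Lemma hratio_lt x la lb : c < x < d -> Lam la -> Lam lb ->
  (forall y z, c <= y -> y < z -> z <= d -> f y lb * f z la < f z lb * f y la) ->
  hratio f c d x la < hratio f c d x lb.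
Proof.
  intros Hx La Lb Hcross.
  apply (RInt_tail_ratio_lt (fun y => f y la) (fun y => f y lb) c d x Hx).
  - intros y Hy. now apply Hpos.
  - intros y Hy. now apply Hpos.
  - now apply f_continuous_in_x.
  - now apply f_continuous_in_x.
  - exact Hcross.
Qed.

End LikelihoodRatio.

Theorem lemmaC1 (c d : R) (Lam : R -> Prop) (f df g : R -> R -> R)
  (Hcd : c < d)
  (HLam : closed_interval Lam)
  (Hpos : forall x lam, c <= x <= d -> Lam lam -> 0 < f x lam)
  (Hfc : continuous_on2 (rect c d Lam) (fun p => f (fst p) (snd p)))
  (Hder : forall x lam, c <= x <= d -> Lam lam ->
            is_derive_within Lam (fun mu => f x mu) lam (df x lam))
  (Hdfc : continuous_on2 (rect c d Lam) (fun p => df (fst p) (snd p)))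
  (Hfg : forall x lam, c <= x <= d -> Lam lam -> df x lam = f x lam * g x lam) :
  ((forall lam, Lam lam -> forall x1 x2, c <= x1 -> x1 < x2 -> x2 <= d ->
       g x1 lam < g x2 lam) ->
   forall x, c < x < d -> forall l1 l2, Lam l1 -> Lam l2 -> l1 < l2 ->
       hratio f c d x l1 < hratio f c d x l2)
  /\
  ((forall lam, Lam lam -> forall x1 x2, c <= x1 -> x1 < x2 -> x2 <= d ->
       g x2 lam < g x1 lam) ->
   forall x, c < x < d -> forall l1 l2, Lam l1 -> Lam l2 -> l1 < l2 ->
       hratio f c d x l2 < hratio f c d x l1).
Proof.
  (* [Hcd] follows from [c < x < d]. *)
  assert (HL : forall l1 mu l2, Lam l1 -> Lam l2 -> l1 < mu < l2 -> Lam mu)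
    by (intros l1 mu l2 L1 L2 Hmu; apply (proj1 HLam l1 mu l2); auto; lra).
  split; intros Hg x Hx l1 l2 L1 L2 Hl;
    apply (hratio_lt c d Lam f Hpos Hfc x); auto; intros y z Hy Hyz Hz.
  - apply (f_cross_lt c d Lam f df g HLam Hpos Hfc Hder Hfg); auto; try lra.
    intros mu Hmu. apply Hg; eauto; lra.
  - enough (f z l2 * f y l1 < f y l2 * f z l1) by lra.
    apply (f_cross_lt c d Lam f df g HLam Hpos Hfc Hder Hfg); auto; try lra.
    intros mu Hmu. apply Hg; eauto; lra.
Qed.
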